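(* Let $F$ be an algebraically closed field (of arbitrary characteristic) and let $V\subseteq M_2(F)$ be a Mathieu subspace with $\dim_FV=2$. Then either $V\subseteq I_2^\perp=\{b\in M_2(F):\mathrm{Tr}(b)=0\}$, or there exist nonzero idempotents $e_1,e_2\in M_2(F)$ with $e_1+e_2=I_2$ and distinct nonzero $\lambda_1,\lambda_2\in F$ with $\lambda_1+\lambda_2\ne0$ such that $V=F(\lambda_1e_1+\lambda_2e_2)+e_1M_2(F)e_2$. Equivalently, either $V\subseteq I_2^\perp$ or $V$ is conjugate to $\left\{\begin{pmatrix}\lambda_1s&t\\0&\lambda_2s\end{pmatrix}: s,t\in F\right\}$ for some distinct nonzero $\lambda_1,\lambda_2\in F$ with $\lambda_1+\lambda_2\ne0$.
   Context: Let $\mathcal A$ be an associative algebra over a field $F$. An $F$-subspace $M\subseteq\mathcal A$ is a Mathieu subspace (MS) of $\mathcal A$ if for all $a,b,c\in\mathcal A$ such that $a^m\in M$ for all $m\ge 1$, there exists $N$ (depending on $a,b,c$) such that $ba^mc\in M$ for all $m\ge N$. *)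

From HB Require Import structures.
From mathcomp Require Import all_boot all_order all_algebra.
Set Implicit Arguments. Unset Strict Implicit. Unset Printing Implicit Defensive.
Import GRing.Theory.
Local Open Scope ring_scope.

(* Mathieu subspace condition for a subset M of a ring A (the F-subspace
   property is supplied separately, e.g. by taking M to be a {vspace _}). *)
Definition mathieu {A : pzRingType} (M : {pred A}) : Prop :=
  forall a b c : A,
    (forall m : nat, (0 < m)%N -> a ^+ m \in M) ->
    exists N : nat, forall m : nat, (N <= m)%N -> b * a ^+ m * c \in M.

(* The argument rests on one general fact: a Mathieu subspace M containing a
   nonzero idempotent e contains every b e c (since e^m = e), and the matrix
   units then show that M is the whole matrix algebra.  Hence a proper Mathieu
   subspace V of M_2(F) contains no nonzero idempotent; by Cayley-Hamilton a
   singular x with tr x <> 0 would give the idempotent x / tr x, so every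
   singular element of V is traceless, and 1 is not in V.

   Now let dim V = 2 and suppose some y in V has tr y <> 0.  Over a closed
   field the plane V contains a nonzero singular n (a root of the quadratic
   det (s z + y)); n is traceless, hence similar to the matrix unit E12, and
   V is spanned by n and y.  In the basis putting n in the form E12, the
   matrix of y is upper triangular (otherwise some y + t n would be singular
   with nonzero trace) with distinct nonzero diagonal entries l1, l2
   (otherwise 1 would lie in V).  Conjugating back the diagonal matrix units
   gives the idempotents e1, e2, and V = F (l1 e1 + l2 e2) + e1 M_2(F) e2. *)

From Stdlib Require Import Classical.
From HB Require Import structures.
From mathcomp Require Import all_boot all_order all_algebra.
From mathcomp Require Import ring.
Import GRing.Theory.
Local Open Scope ring_scope.
Set Implicit Arguments.
Unset Strict Implicit.

(* In any ring, a Mathieu subset containing an idempotent e contains all the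
   products b e c: the powers of e are all equal to e. *)
Lemma mathieu_idempotent_sandwich (A : pzRingType) (M : {pred A}) (e b c : A) :
  mathieu M -> e \in M -> e * e = e -> b * e * c \in M.
Proof.
move=> HM eM ee.
have e_pow m : (0 < m)%N -> e ^+ m = e.
  by case: m => // m _; elim: m => [|m IHm]; rewrite ?expr1 // exprS IHm ee.
have [|N HN] := HM e b c; first by move=> m m_gt0; rewrite e_pow.
by have := HN N.+1 (leqnSn N); rewrite e_pow.
Qed.

Lemma delta_sandwich (R : comPzRingType) (n : nat) (A : 'M[R]_n) (r i j s : 'I_n) :
  delta_mx r i *m A *m delta_mx j s = A i j *: delta_mx r s.
Proof.
rewrite -(mul_delta_mx (0 : 'I_1) r i) -(mul_delta_mx (0 : 'I_1) j s) !mulmxA.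
rewrite -(mulmxA _ _ A) -rowE -(mulmxA _ _ (delta_mx j 0)) -colE.
by rewrite [col j _]mx11_scalar mul_mx_scalar -scalemxAl mul_delta_mx !mxE.
Qed.

(* A subspace of M_n(F) containing all b e c for some nonzero e is everything:
   each matrix unit is a multiple of some E_ri e E_js. *)
Lemma sandwich_full (F : fieldType) (n : nat) (V : {vspace 'M[F]_n.+1})
    (e : 'M[F]_n.+1) :
  e != 0 -> (forall b c, b * e * c \in V) -> V = fullv.
Proof.
move=> /matrix0Pn [i [j eij]] sandV; apply/vspaceP => x; rewrite memvf.
rewrite (matrix_sum_delta x); apply: memv_suml => r _; apply: memv_suml => s _.
have -> : x r s *: delta_mx r s = (x r s / e i j) *: (delta_mx r i * e * delta_mx j s).
  by rewrite [_ * _ * _]delta_sandwich scalerA divfK.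
exact: memvZ.
Qed.

Lemma mathieu_no_idempotent (F : fieldType) (n : nat) (V : {vspace 'M[F]_n.+1})
    (e : 'M[F]_n.+1) :
  mathieu (V : {pred 'M[F]_n.+1}) -> V != fullv -> e \in V -> e * e = e -> e = 0.
Proof.
move=> HM V_proper eV ee; apply: contraNeq V_proper => e_nz; apply/eqP.
by apply: (sandwich_full e_nz) => b c; apply: mathieu_idempotent_sandwich.
Qed.

Lemma quadratic_root (F : closedFieldType) (a b c : F) :
  a != 0 -> exists s, a * s ^+ 2 + b * s + c = 0.
Proof.
move=> a_nz; have [s] := @solve_monicpoly F 2 (nth 0 [:: - c / a; - b / a]) isT.
rewrite !big_ord_recl big_ord0 /= expr0 expr1 => s2E.
by exists s; rewrite s2E; field.
Qed.

Section TwoByTwo.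
Variable R : comNzRingType.

(* Explicit 2 x 2 matrices, so that matrix identities reduce to [ring]. *)
Definition mx2 (a b c d : R) : 'M[R]_2 :=
  \matrix_(i, j) if i == 0 then (if j == 0 then a else b)
                 else (if j == 0 then c else d).

Lemma ord2P (i : 'I_2) : i = 0 \/ i = 1.
Proof. by case: i => [[|[|//]]] i_lt2; [left | right]; apply: val_inj. Qed.

Lemma mx2_eta (M : 'M[R]_2) : M = mx2 (M 0 0) (M 0 1) (M 1 0) (M 1 1).
Proof. by apply/matrixP=> i j; rewrite mxE; case: (ord2P i) => ->; case: (ord2P j) => ->. Qed.

Lemma mulmx2 a b c d a' b' c' d' : mx2 a b c d * mx2 a' b' c' d' =
  mx2 (a * a' + b * c') (a * b' + b * d') (c * a' + d * c') (c * b' + d * d').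
Proof.
apply/matrixP=> i j; rewrite -mulmxE !mxE !big_ord_recl big_ord0 addr0 !mxE.
by case: (ord2P i) => ->; case: (ord2P j) => ->.
Qed.

Lemma addmx2 a b c d a' b' c' d' :
  mx2 a b c d + mx2 a' b' c' d' = mx2 (a + a') (b + b') (c + c') (d + d').
Proof. by apply/matrixP=> i j; rewrite !mxE; case: (ord2P i) => ->; case: (ord2P j) => ->. Qed.

Lemma scalemx2 k a b c d : k *: mx2 a b c d = mx2 (k * a) (k * b) (k * c) (k * d).
Proof. by apply/matrixP=> i j; rewrite !mxE; case: (ord2P i) => ->; case: (ord2P j) => ->. Qed.

Lemma oppmx2 a b c d : - mx2 a b c d = mx2 (- a) (- b) (- c) (- d).
Proof. by apply/matrixP=> i j; rewrite !mxE; case: (ord2P i) => ->; case: (ord2P j) => ->. Qed.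

Lemma onemx2 : 1 = mx2 1 0 0 1.
Proof. by apply/matrixP=> i j; rewrite !mxE; case: (ord2P i) => ->; case: (ord2P j) => ->. Qed.

Lemma zeromx2 : 0 = mx2 0 0 0 0.
Proof. by apply/matrixP=> i j; rewrite !mxE; case: (ord2P i) => ->; case: (ord2P j) => ->. Qed.

Lemma trace_mx2 a b c d : \tr (mx2 a b c d) = a + d.
Proof. by rewrite /mxtrace !big_ord_recl big_ord0 addr0 !mxE. Qed.

Lemma det_mx2 a b c d : \det (mx2 a b c d) = a * d - b * c.
Proof.
rewrite (expand_det_row _ 0) !big_ord_recl big_ord0 addr0 /cofactor !det_mx11 !mxE /=.
by rewrite /bump /= expr1 mulN1r mulrN mul1r.
Qed.

Definition mx2_arith :=
  (onemx2, zeromx2, mulmx2, addmx2, scalemx2, oppmx2, trace_mx2, det_mx2).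

Lemma cayley_hamilton2 (M : 'M[R]_2) : M * M = \tr M *: M - \det M *: 1.
Proof. by rewrite [M]mx2_eta !mx2_arith; congr mx2; ring. Qed.

Lemma det_pencil2 (s : R) (M N : 'M[R]_2) :
  \det (s *: M + N) = \det M * s ^+ 2
    + (M 0 0 * N 1 1 + M 1 1 * N 0 0 - M 0 1 * N 1 0 - M 1 0 * N 0 1) * s + \det N.
Proof. by rewrite [M]mx2_eta [N]mx2_eta !mx2_arith !mxE /=; ring. Qed.

End TwoByTwo.

Lemma nilpotent_similar_E12 (F : fieldType) (n : 'M[F]_2) :
  \tr n = 0 -> \det n = 0 -> n != 0 ->
  exists P Q, [/\ P * Q = 1, Q * P = 1 & n = P * mx2 0 1 0 0 * Q].
Proof.
rewrite [n]mx2_eta; move: (n 0 0) (n 0 1) (n 1 0) (n 1 1) => a b c d.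
rewrite trace_mx2 det_mx2 => /eqP; rewrite addr_eq0 => /eqP->.
have [-> | c_nz] := eqVneq c 0 => det0 n_nz.
  have d0 : d = 0.
    by move/eqP: det0; rewrite mulr0 subr0 mulNr oppr_eq0 mulf_eq0 orbb => /eqP.
  have b_nz : b != 0 by apply: contra n_nz => /eqP b0; rewrite d0 b0 oppr0 -zeromx2.
  exists (mx2 b 0 0 1), (mx2 b^-1 0 0 1).
  by rewrite !mx2_arith d0; split; congr mx2; field.
have b_def : b = - (d * d) / c.
  by apply: (canRL (mulfK c_nz)); rewrite -[b * c]addr0 -det0; ring.
exists (mx2 (- d) 1 c 0), (mx2 0 c^-1 1 (d / c)).
by rewrite !mx2_arith b_def; split; congr mx2; field.
Qed.

Section Similarity.
Variable R : comNzRingType.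
Variables P Q : 'M[R]_2.
Hypotheses (PQ : P * Q = 1) (QP : Q * P = 1).

Lemma conjM (A B : 'M[R]_2) : P * A * Q * (P * B * Q) = P * (A * B) * Q.
Proof. by rewrite !mulrA -(mulrA (P * A) Q P) QP mulr1. Qed.

Lemma conjK (A : 'M[R]_2) : Q * (P * A * Q) * P = A.
Proof. by rewrite !mulrA QP mul1r -mulrA QP mulr1. Qed.

Lemma conjVK (A : 'M[R]_2) : P * (Q * A * P) * Q = A.
Proof. by rewrite !mulrA PQ mul1r -mulrA PQ mulr1. Qed.

Lemma conjD (A B : 'M[R]_2) : P * A * Q + P * B * Q = P * (A + B) * Q.
Proof. by rewrite -mulrDl -mulrDr. Qed.

Lemma conjZ (k : R) (A : 'M[R]_2) : k *: (P * A * Q) = P * (k *: A) * Q.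
Proof. by rewrite scalerAl scalerAr. Qed.

Lemma det_conj (A : 'M[R]_2) : \det (P * A * Q) = \det A.
Proof. by rewrite !det_mulmx mulrAC -det_mulmx -[P *m Q]/(P * Q) PQ det1 mul1r. Qed.

Lemma trace_conj (A : 'M[R]_2) : \tr (P * A * Q) = \tr A.
Proof. by rewrite mxtrace_mulC mulmxA -[Q *m P]/(Q * P) QP mul1mx. Qed.

Lemma conj_diagonal_idempotents :
  [/\ P * mx2 1 0 0 0 * Q != 0, P * mx2 0 0 0 1 * Q != 0,
      (P * mx2 1 0 0 0 * Q) * (P * mx2 1 0 0 0 * Q) = P * mx2 1 0 0 0 * Q,
      (P * mx2 0 0 0 1 * Q) * (P * mx2 0 0 0 1 * Q) = P * mx2 0 0 0 1 * Q &
      P * mx2 1 0 0 0 * Q + P * mx2 0 0 0 1 * Q = 1].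
Proof.
have conj_nz (A : 'M[R]_2) i j : A i j != 0 -> P * A * Q != 0.
  apply: contra => /eqP E; rewrite -[A]conjK E mulr0 mul0r mxE.
  by case: (i == j).
split.
- by apply: (conj_nz _ 0 0); rewrite mxE oner_neq0.
- by apply: (conj_nz _ 1 1); rewrite mxE oner_neq0.
- by rewrite conjM mulmx2; congr (P * _ * Q); congr mx2; ring.
- by rewrite conjM mulmx2; congr (P * _ * Q); congr mx2; ring.
by rewrite -mulrDl -mulrDr addmx2 !(addr0, add0r) -onemx2 mulr1.
Qed.

Lemma conj_corner (Y : 'M[R]_2) :
  P * mx2 1 0 0 0 * Q * Y * (P * mx2 0 0 0 1 * Q) = (Q * Y * P) 0 1 *: (P * mx2 0 1 0 0 * Q).
Proof.
rewrite -{1}[Y]conjVK; set W := Q * Y * P.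
rewrite {1}[W]mx2_eta !conjM scalerAl scalerAr !mx2_arith.
by congr (P * _ * Q); congr mx2; ring.
Qed.

End Similarity.

Lemma memv_add_lines (K : fieldType) (vT : vectType K) (u v x : vT) :
  x \in (<[u]> + <[v]>)%VS <-> exists k m, x = k *: u + m *: v.
Proof.
split=> [/memv_addP [_ /vlineP [k ->] [_ /vlineP [m ->] ->]] | [k [m ->]]].
  by exists k, m.
by apply: memv_add; apply: memvZ; apply: memv_line.
Qed.

Lemma conj_triangular_plane (F : fieldType) (P Q : 'M[F]_2) (a b d : F) (x : 'M[F]_2) :
  P * Q = 1 -> Q * P = 1 ->
  let e1 := P * mx2 1 0 0 0 * Q in let e2 := P * mx2 0 0 0 1 * Q in
  x \in (<[P * mx2 0 1 0 0 * Q]> + <[P * mx2 a b 0 d * Q]>)%VS <->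
  exists (s : F) (Y : 'M[F]_2), x = s *: (a *: e1 + d *: e2) + e1 * Y * e2.
Proof.
move=> PQ QP e1 e2; set n := P * mx2 0 1 0 0 * Q.
have corner Y : e1 * Y * e2 = (Q * Y * P) 0 1 *: n by exact: conj_corner.
rewrite memv_add_lines; split=> [[k [m ->]] | [s [Y ->]]].
  exists m, ((k + m * b) *: n); rewrite corner /n /e1 /e2 !conjZ conjK //.
  rewrite -!mulrDl -!mulrDr !conjZ -!mulrDl -!mulrDr !mx2_arith !mxE /=.
  by congr (P * _ * Q); congr mx2; ring.
exists ((Q * Y * P) 0 1 - s * b), s; rewrite corner /n /e1 /e2 !conjZ.
rewrite -!mulrDl -!mulrDr !conjZ -!mulrDl -!mulrDr !mx2_arith.
by congr (P * _ * Q); congr mx2; ring.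
Qed.

Section MathieuPlane.
Variable F : fieldType.
Variable V : {vspace 'M[F]_2}.
Hypotheses (HM : mathieu (V : {pred 'M[F]_2})) (dimV : \dim V = 2).

Lemma plane_proper : V != fullv.
Proof. by apply: contra_eqN dimV => /eqP->; rewrite dimvf. Qed.

Lemma one_notin_plane : (1 : 'M[F]_2) \notin V.
Proof.
apply/negP => oneV; have /eqP := oner_neq0 'M[F]_2; apply.
exact: (mathieu_no_idempotent HM plane_proper oneV (mulr1 _)).
Qed.

(* A singular x with tr x <> 0 would give the nonzero idempotent x / tr x. *)
Lemma singular_traceless (x : 'M[F]_2) : x \in V -> \det x = 0 -> \tr x = 0.
Proof.
move=> xV det0; apply/eqP; apply: contraT => tr_nz.
have e_idem : ((\tr x)^-1 *: x) * ((\tr x)^-1 *: x) = (\tr x)^-1 *: x.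
  rewrite -scalerAl -scalerAr cayley_hamilton2 det0 scale0r subr0 !scalerA.
  by congr (_ *: x); field.
have := mathieu_no_idempotent HM plane_proper (memvZ _ xV) e_idem.
move/eqP; rewrite scaler_eq0 invr_eq0 (negbTE tr_nz) /= => /eqP x0.
by move: tr_nz; rewrite x0 mxtrace0 eqxx.
Qed.

Variable y : 'M[F]_2.
Hypotheses (yV : y \in V) (tr_y : \tr y != 0).

Lemma plane_span (n : 'M[F]_2) :
  n \in V -> n != 0 -> \tr n = 0 -> V = (<[n]> + <[y]>)%VS.
Proof.
move=> nV n_nz tr_n; apply/eqP; rewrite eq_sym eqEdim.
rewrite subv_add -!memvE nV yV /=.
have y_nz : y != 0 by apply: contraNneq tr_y => ->; rewrite mxtrace0.
have n_notin : n \notin <[y]>%VS.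
  apply: contra n_nz => /vlineP [k nE]; move: tr_n; rewrite nE mxtraceZ.
  by move/eqP; rewrite mulf_eq0 (negbTE tr_y) orbF => /eqP->; rewrite scale0r.
have : free [:: n; y] by rewrite free_cons seq1_free span_seq1 n_notin y_nz.
by rewrite /free span_cons span_seq1 dimV => /eqP->.
Qed.

Variables P Q : 'M[F]_2.
Hypotheses (PQ : P * Q = 1) (QP : Q * P = 1) (nV : P * mx2 0 1 0 0 * Q \in V).

(* In a basis where the conjugate n of E12 is E12 itself, y is upper
   triangular with distinct nonzero diagonal entries: a nonzero lower entry
   would make some y + t n singular with trace tr y, and equal diagonal
   entries would put 1 = (y - b n) / a in V. *)
Lemma traceful_triangular :
  exists a b d, [/\ y = P * mx2 a b 0 d * Q, a != 0, d != 0 & a != d].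
Proof.
set n := P * mx2 0 1 0 0 * Q.
move: (Q * y * P) (conjVK PQ y) => W; rewrite [W]mx2_eta.
move: (W 0 0) (W 0 1) (W 1 0) (W 1 1) => a b c d /esym yE.
have c0 : c = 0.
  apply/eqP; apply: contraT => c_nz; pose t := a * d / c - b.
  have sing : \det (y + t *: n) = 0.
    by rewrite yE conjZ conjD det_conj // !mx2_arith /t; field.
  have := singular_traceless (memvD yV (memvZ t nV)) sing.
  rewrite mxtraceD mxtraceZ trace_conj // trace_mx2 add0r mulr0 addr0 => tr0.
  by move: tr_y; rewrite tr0 eqxx.
subst c; have det_nz : \det y != 0.
  by apply: contra tr_y => /eqP /(singular_traceless yV) ->.
move: det_nz; rewrite yE det_conj // det_mx2 mulr0 subr0 mulf_eq0 negb_or.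
case/andP => a_nz d_nz; exists a, b, d; split => //.
apply: contraNneq one_notin_plane => ad.
have -> : (1 : 'M[F]_2) = a^-1 *: (y - b *: n).
  rewrite yE -scaleNr !conjZ conjD conjZ.
  have -> : a^-1 *: (mx2 a b 0 d + - b *: mx2 0 1 0 0) = 1.
    by rewrite !mx2_arith -ad; congr mx2; field.
  by rewrite mulr1 PQ.
by apply: memvZ; apply: memvB => //; apply: memvZ.
Qed.

End MathieuPlane.

(* Over an algebraically closed field every plane of 2 x 2 matrices contains a
   nonzero singular matrix: if the basis vector z is invertible, det (s z + y)
   is a genuine quadratic in s, which has a root. *)
Lemma singular_in_plane (F : closedFieldType) (V : {vspace 'M[F]_2}) :
  \dim V = 2 -> exists2 n, n \in V & n != 0 /\ \det n = 0.
Proof.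
move=> dimV; have size2 : size (vbasis V) = 2 by rewrite size_tuple dimV.
move: size2 (vbasisP V).
case: (tval (vbasis V)) => [|y [|z [|]]] //= _ /andP [/eqP spanV].
rewrite free_cons seq1_free span_seq1 => /andP [y_notin z_nz].
have [yV zV] : y \in V /\ z \in V by rewrite -spanV !memv_span ?inE ?eqxx ?orbT.
have [det_z0 | det_z_nz] := eqVneq (\det z) 0; first by exists z.
have [s s_root] := quadratic_root
  (z 0 0 * y 1 1 + z 1 1 * y 0 0 - z 0 1 * y 1 0 - z 1 0 * y 0 1) (\det y) det_z_nz.
exists (s *: z + y); first by apply: memvD => //; apply: memvZ.
split; last by rewrite det_pencil2.
apply: contra y_notin => /eqP sz_y0; apply/vlineP; exists (- s).
by apply/eqP; rewrite scaleNr -addr_eq0 addrC sz_y0.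
Qed.

Unset Implicit Arguments.

Theorem corollary3p2 (F : closedFieldType) (V : {vspace 'M[F]_2}) :
  mathieu (V : {pred 'M[F]_2}) -> \dim V = 2%N ->
  (forall b : 'M[F]_2, b \in V -> \tr b = 0)
  \/
  (exists (e1 e2 : 'M[F]_2) (l1 l2 : F),
      [/\ e1 != 0, e2 != 0, e1 * e1 = e1, e2 * e2 = e2 & e1 + e2 = 1]
      /\ [/\ l1 != 0, l2 != 0, l1 != l2 & l1 + l2 != 0]
      /\ (forall x : 'M[F]_2,
            x \in V <->
            exists (s : F) (y : 'M[F]_2),
              x = s *: (l1 *: e1 + l2 *: e2) + e1 * y * e2)).
Proof.
move=> HM dimV.
have [[y yV tr_y] | all_traceless] :=
  classic (exists2 y : 'M[F]_2, y \in V & \tr y != 0); [right | left]; last first.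
  by move=> b bV; apply/eqP; apply: contraT => tr_b; case: all_traceless; exists b.
have [n nV [n_nz det_n]] := singular_in_plane dimV.
have tr_n := singular_traceless HM dimV nV det_n.
have [P [Q [PQ QP nE]]] := nilpotent_similar_E12 tr_n det_n n_nz.
have nV' : P * mx2 0 1 0 0 * Q \in V by rewrite -nE.
have [a [b [d [yE a_nz d_nz a_neq_d]]]] := traceful_triangular HM dimV yV tr_y PQ QP nV'.
have [e1_nz e2_nz e1_idem e2_idem e1_e2] := conj_diagonal_idempotents PQ QP.
exists (P * mx2 1 0 0 0 * Q), (P * mx2 0 0 0 1 * Q), a, d; split=> //; split.
  by split=> //; move: tr_y; rewrite yE trace_conj // trace_mx2.
move=> x; rewrite (plane_span dimV yV tr_y nV n_nz tr_n) nE yE.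
exact: conj_triangular_plane.
Qed.
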